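(* Let $(A,\mu,\alpha,\beta)$ be a BiHom-associative algebra (with $\mu(a\otimes b)=a\cdot b$) and let $r=\sum_i x_i\otimes y_i\in A\otimes A$ be such that $(\alpha\otimes\alpha)(r)=r=(\beta\otimes\beta)(r)$ and $a\bullet A(r)=A(r)\bullet a$ for all $a\in A$. Define $\Delta_r:A\to A\otimes A$ by $\Delta_r(a)=\sum_i\alpha(x_i)\otimes y_i\cdot a-\sum_i a\cdot x_i\otimes\beta(y_i)$. Then $(A,\mu,\Delta_r,\alpha,\beta,\psi=\beta,\omega=\alpha)$ is an infinitesimal BiHom-bialgebra.
   Context: Work over a field. A BiHom-associative algebra is a 4-tuple $(A,\mu,\alpha,\beta)$ with $\alpha,\beta$ commuting linear maps, multiplicative for $\mu$, and $\alpha(x)\cdot(y\cdot z)=(x\cdot y)\cdot\beta(z)$. Actions of $A$ on $A\otimes A\otimes A$: $a\bullet(x\otimes y\otimes z)=\alpha(a)\cdot x\otimes\beta(y)\otimes\beta(z)$ and $(x\otimes y\otimes z)\bullet a=\alpha(x)\otimes\alpha(y)\otimes z\cdot\beta(a)$. With $r=\sum_i x_i\otimes y_i$: $r_{12}r_{23}=\sum_{i,j}\alpha(x_i)\otimes y_i\cdot x_j\otimes\beta(y_j)$, $r_{13}r_{12}=\sum_{i,j}x_i\cdot x_j\otimes\beta(y_j)\otimes\beta(y_i)$, $r_{23}r_{13}=\sum_{i,j}\alpha(x_i)\otimes\alpha(x_j)\otimes y_j\cdot y_i$, $A(r)=r_{13}r_{12}-r_{12}r_{23}+r_{23}r_{13}$.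 A BiHom-coassociative coalgebra is $(C,\Delta,\psi,\omega)$ with $\psi\omega=\omega\psi$, $(\psi\otimes\psi)\Delta=\Delta\psi$, $(\omega\otimes\omega)\Delta=\Delta\omega$ and $(\Delta\otimes\psi)\Delta=(\omega\otimes\Delta)\Delta$. An infinitesimal BiHom-bialgebra is a 7-tuple $(A,\mu,\Delta,\alpha,\beta,\psi,\omega)$ such that $(A,\mu,\alpha,\beta)$ is BiHom-associative, $(A,\Delta,\psi,\omega)$ is BiHom-coassociative, and for all $a,b$ (with $\Delta(a)=a_1\otimes a_2$): $\Delta(a\cdot b)=\omega(a)\cdot b_1\otimes\beta(b_2)+\alpha(a_1)\otimes a_2\cdot\psi(b)$; $\alpha\psi=\psi\alpha$, $\alpha\omega=\omega\alpha$, $\beta\psi=\psi\beta$, $\beta\omega=\omega\beta$; $(\alpha\otimes\alpha)\Delta=\Delta\alpha$, $(\beta\otimes\beta)\Delta=\Delta\beta$; $\psi,\omega$ multiplicative for $\mu$. *)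

From HB Require Import structures.
From mathcomp Require Import all_boot all_order all_algebra.
Set Implicit Arguments. Unset Strict Implicit. Unset Printing Implicit Defensive.
Import GRing.Theory.
Local Open Scope ring_scope.

(* Tensors in A (x) A and A (x) A (x) A over a field K are represented by
   finite lists of elementary tensors (sum of x_i (x) y_i).  Equality of
   tensors is the equality in the genuine tensor product: over a field,
   elementary products of linear functionals separate the points of
   A (x) A (resp. A (x) A (x) A), so two formal sums denote the same tensor
   iff all such pairings agree. *)

Section Tensors.
Variables (K : fieldType) (A : lmodType K).

Definition tensor2 := seq (A * A).
Definition tensor3 := seq (A * A * A).

Definition pair2 (f g : {scalar A}) (t : tensor2) : K :=
  \sum_(p <- t) f p.1 * g p.2.
Definition pair3 (f g h : {scalar A}) (t : tensor3) : K :=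
  \sum_(p <- t) f p.1.1 * g p.1.2 * h p.2.

Definition teq2 (s t : tensor2) : Prop :=
  forall f g : {scalar A}, pair2 f g s = pair2 f g t.
Definition teq3 (s t : tensor3) : Prop :=
  forall f g h : {scalar A}, pair3 f g h s = pair3 f g h t.

Definition tscale2 (k : K) (t : tensor2) : tensor2 :=
  [seq (k *: p.1, p.2) | p <- t].
Definition tscale3 (k : K) (t : tensor3) : tensor3 :=
  [seq (k *: p.1.1, p.1.2, p.2) | p <- t].

Definition tmap2 (f g : A -> A) (t : tensor2) : tensor2 :=
  [seq (f p.1, g p.2) | p <- t].

Definition DeltaL (D : A -> tensor2) (psi : A -> A) (t : tensor2) : tensor3 :=
  flatten [seq [seq (q.1, q.2, psi p.2) | q <- D p.1] | p <- t].
Definition DeltaR (omega : A -> A) (D : A -> tensor2) (t : tensor2) : tensor3 :=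
  flatten [seq [seq (omega p.1, q.1, q.2) | q <- D p.2] | p <- t].

Record BiHomAssociative (mul : A -> A -> A) (alpha beta : A -> A) : Prop := {
  bha_mull : forall b, linear (fun a => mul a b);
  bha_mulr : forall a, linear (mul a);
  bha_alpha_lin : linear alpha;
  bha_beta_lin : linear beta;
  bha_comm : forall x, alpha (beta x) = beta (alpha x);
  bha_alpha_mul : forall x y, alpha (mul x y) = mul (alpha x) (alpha y);
  bha_beta_mul : forall x y, beta (mul x y) = mul (beta x) (beta y);
  bha_assoc : forall x y z, mul (alpha x) (mul y z) = mul (mul x y) (beta z)
}.

Record BiHomCoassociative (Delta : A -> tensor2) (psi omega : A -> A) : Prop := {
  bhc_Delta_lin : forall (k : K) a b,
      teq2 (Delta (k *: a + b)) (tscale2 k (Delta a) ++ Delta b);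
  bhc_psi_lin : linear psi;
  bhc_omega_lin : linear omega;
  bhc_comm : forall x, psi (omega x) = omega (psi x);
  bhc_psi : forall x, teq2 (tmap2 psi psi (Delta x)) (Delta (psi x));
  bhc_omega : forall x, teq2 (tmap2 omega omega (Delta x)) (Delta (omega x));
  bhc_coassoc : forall x,
      teq3 (DeltaL Delta psi (Delta x)) (DeltaR omega Delta (Delta x))
}.

Record InfBiHomBialgebra (mul : A -> A -> A) (Delta : A -> tensor2)
    (alpha beta psi omega : A -> A) : Prop := {
  ib_alg : BiHomAssociative mul alpha beta;
  ib_coalg : BiHomCoassociative Delta psi omega;
  ib_compat : forall a b,
      teq2 (Delta (mul a b))
        ([seq (mul (omega a) q.1, beta q.2) | q <- Delta b]
         ++ [seq (alpha q.1, mul q.2 (psi b)) | q <- Delta a]);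
  ib_alpha_psi : forall x, alpha (psi x) = psi (alpha x);
  ib_alpha_omega : forall x, alpha (omega x) = omega (alpha x);
  ib_beta_psi : forall x, beta (psi x) = psi (beta x);
  ib_beta_omega : forall x, beta (omega x) = omega (beta x);
  ib_alpha_Delta : forall x, teq2 (tmap2 alpha alpha (Delta x)) (Delta (alpha x));
  ib_beta_Delta : forall x, teq2 (tmap2 beta beta (Delta x)) (Delta (beta x));
  ib_psi_mul : forall x y, psi (mul x y) = mul (psi x) (psi y);
  ib_omega_mul : forall x y, omega (mul x y) = mul (omega x) (omega y)
}.

Section Rmatrix.
Variables (mul : A -> A -> A) (alpha beta : A -> A) (r : tensor2).

Definition r12r23 : tensor3 :=
  [seq (alpha p.1, mul p.2 q.1, beta q.2) | p <- r, q <- r].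
Definition r13r12 : tensor3 :=
  [seq (mul p.1 q.1, beta q.2, beta p.2) | p <- r, q <- r].
Definition r23r13 : tensor3 :=
  [seq (alpha p.1, alpha q.1, mul q.2 p.2) | p <- r, q <- r].

Definition Ar : tensor3 := r13r12 ++ tscale3 (-1) r12r23 ++ r23r13.

Definition lact (a : A) (t : tensor3) : tensor3 :=
  [seq (mul (alpha a) p.1.1, beta p.1.2, beta p.2) | p <- t].
Definition ract (t : tensor3) (a : A) : tensor3 :=
  [seq (alpha p.1.1, alpha p.1.2, mul p.2 (beta a)) | p <- t].

Definition Delta_r (a : A) : tensor2 :=
  [seq (alpha p.1, mul p.2 a) | p <- r] ++ tscale2 (-1) [seq (mul a p.1, beta p.2) | p <- r].

End Rmatrix.
End Tensors.

From HB Require Import structures.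
From mathcomp Require Import all_boot all_order all_algebra.
From mathcomp Require Import ring.
Set Implicit Arguments. Unset Strict Implicit. Unset Printing Implicit Defensive.
Import GRing.Theory.
Local Open Scope ring_scope.

(* Tensor identities are tested against products of linear functionals, which
   turns them into identities between finite sums over r.  Two rules drive all
   computations: BiHom-associativity, and the invariance
   (alpha (x) alpha) r = r = (beta (x) beta) r, which inserts or removes alpha
   (or beta) on both legs of one copy of r.  For coassociativity,
   (Delta_r (x) beta) Delta_r(a) - (alpha (x) Delta_r) Delta_r(a) expands into
   eight double sums over r; two of them cancel, and after normalisation the
   remaining six are exactly the six terms of a . A(r) - A(r) . a, which
   vanishes by hypothesis. *)

Section Pairings.
Variables (K : fieldType) (A : lmodType K).

Definition linear_pack (F : A -> A) (hF : linear F) : {linear A -> A} :=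
  HB.pack F (GRing.isLinear.Build _ _ _ _ F hF).

Lemma linearN1_fun (F : A -> A) : linear F -> forall x, F ((-1) *: x) = (-1) *: F x.
Proof. by move=> hF x; exact: (linearZ_LR (linear_pack hF)). Qed.

Lemma scalarN1 (f : {scalar A}) x : f ((-1) *: x) = - f x.
Proof. by rewrite linearZ /= mulN1r. Qed.

Lemma scalar_comp_subproof (f : {scalar A}) (u : A -> A) :
  linear u -> linear_for *%R (fun x => f (u x)).
Proof. by move=> hu k x y; rewrite /= hu linearP. Qed.

Definition scalar_comp (f : {scalar A}) (u : A -> A) (hu : linear u) : {scalar A} :=
  HB.pack (fun x => f (u x)) (GRing.isLinear.Build _ _ _ _ _ (scalar_comp_subproof f hu)).

Lemma teq2_tmap2 (u v : A -> A) s t : linear u -> linear v ->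
  teq2 s t -> teq2 (tmap2 u v s) (tmap2 u v t).
Proof.
move=> hu hv Hst f g; have := Hst (scalar_comp f hu) (scalar_comp g hv).
by rewrite /pair2 /tmap2 !big_map.
Qed.

Lemma pair2_cat (f g : {scalar A}) s t : pair2 f g (s ++ t) = pair2 f g s + pair2 f g t.
Proof. exact: big_cat. Qed.

Lemma pair2_tscale2 (f g : {scalar A}) k t : pair2 f g (tscale2 k t) = k * pair2 f g t.
Proof.
rewrite /pair2 big_map big_distrr /=.
by apply: eq_bigr => p _; rewrite linearZ /= mulrA.
Qed.

Lemma pair2_tmap2 (f g : {scalar A}) (u v : A -> A) (hu : linear u) (hv : linear v) t :
  pair2 f g (tmap2 u v t) = pair2 (scalar_comp f hu) (scalar_comp g hv) t.
Proof. exact: big_map. Qed.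

Section Invariant.
Variables (s u v : A -> A) (t : tensor2 A).
Hypotheses (Hs : teq2 (tmap2 s s t) t) (hu : linear u) (hv : linear v).

Lemma sum_invariant (f g : {scalar A}) :
  \sum_(p <- t) f (u (s p.1)) * g (v (s p.2)) = \sum_(p <- t) f (u p.1) * g (v p.2).
Proof. by have := teq2_tmap2 hu hv Hs f g; rewrite /pair2 /tmap2 !big_map. Qed.

Lemma sum_invariantr (f g : {scalar A}) (c : K) :
  \sum_(p <- t) f (u (s p.1)) * g (v (s p.2)) * c = \sum_(p <- t) f (u p.1) * g (v p.2) * c.
Proof. by rewrite -!big_distrl /= sum_invariant. Qed.

Lemma sum_invariantl (f g : {scalar A}) (c : K) :
  \sum_(p <- t) c * f (u (s p.1)) * g (v (s p.2)) = \sum_(p <- t) c * f (u p.1) * g (v p.2).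
Proof.
under eq_bigr do rewrite -mulrA; under [RHS]eq_bigr do rewrite -mulrA.
by rewrite -!big_distrr /= sum_invariant.
Qed.

End Invariant.
End Pairings.

Section RMatrixCoproduct.
Variables (K : fieldType) (A : lmodType K) (mul : A -> A -> A) (alpha beta : A -> A)
  (r : tensor2 A).

Local Notation D := (Delta_r mul alpha beta r).

Lemma sum_Delta_r (F : A -> A -> K) x :
  (forall u v, F ((-1) *: u) v = - F u v) ->
  \sum_(q <- D x) F q.1 q.2 =
  \sum_(p <- r) F (alpha p.1) (mul p.2 x) - \sum_(p <- r) F (mul x p.1) (beta p.2).
Proof.
move=> FN; rewrite /Delta_r /tscale2 big_cat !big_map /= -sumrN.
by congr (_ + _); apply: eq_bigr => p _; rewrite FN.
Qed.

Lemma pair2_Delta_r (f g : {scalar A}) x :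
  pair2 f g (D x) =
  \sum_(p <- r) f (alpha p.1) * g (mul p.2 x) - \sum_(p <- r) f (mul x p.1) * g (beta p.2).
Proof. by apply: (sum_Delta_r (F := fun u v => f u * g v)) => u v; rewrite scalarN1 mulNr. Qed.

Lemma sum_Delta_r_mulr (f g : {scalar A}) c x :
  \sum_(q <- D x) f q.1 * g q.2 * c =
  \sum_(p <- r) f (alpha p.1) * g (mul p.2 x) * c - \sum_(p <- r) f (mul x p.1) * g (beta p.2) * c.
Proof. by apply: (sum_Delta_r (F := fun u v => f u * g v * c)) => u v; rewrite scalarN1 !mulNr. Qed.

Lemma sum_Delta_r_mull (f g : {scalar A}) c x :
  \sum_(q <- D x) c * f q.1 * g q.2 =
  \sum_(p <- r) c * f (alpha p.1) * g (mul p.2 x) - \sum_(p <- r) c * f (mul x p.1) * g (beta p.2).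
Proof. by apply: (sum_Delta_r (F := fun u v => c * f u * g v)) => u v; rewrite scalarN1 mulrN mulNr. Qed.

Hypothesis HA : BiHomAssociative mul alpha beta.

Let alpha_lin := bha_alpha_lin HA.
Let beta_lin := bha_beta_lin HA.
Let mull_lin := bha_mull HA.
Let mulr_lin := bha_mulr HA.
Let assoc := bha_assoc HA.
Let alpha_mul := bha_alpha_mul HA.
Let beta_mul := bha_beta_mul HA.
Let alpha_beta := bha_comm HA.

Lemma pair2_Delta_rN1 (f g : {scalar A}) x :
  pair2 f g (D ((-1) *: x)) = - pair2 f g (D x).
Proof.
rewrite !pair2_Delta_r opprB.
under eq_bigr do rewrite (linearN1_fun (mulr_lin _)) scalarN1 mulrN.
under [X in _ - X = _]eq_bigr do rewrite (linearN1_fun (mull_lin _)) scalarN1 mulNr.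
by rewrite !sumrN opprK addrC.
Qed.

Lemma Delta_r_linear k a b : teq2 (D (k *: a + b)) (tscale2 k (D a) ++ D b).
Proof.
move=> f g; rewrite pair2_cat pair2_tscale2 !pair2_Delta_r.
under eq_bigr do rewrite mulr_lin linearP /= mulrDr.
under [X in _ - X]eq_bigr do rewrite mull_lin linearP /= mulrDl.
rewrite !big_split /=.
under [X in X + _ - _]eq_bigr do rewrite mulrCA.
under [X in _ - (X + _)]eq_bigr do rewrite -mulrA.
rewrite -!big_distrr /=; ring.
Qed.

Lemma Delta_r_morph (s : A -> A) : linear s -> teq2 (tmap2 s s r) r ->
  (forall x, s (alpha x) = alpha (s x)) -> (forall x, s (beta x) = beta (s x)) ->
  (forall x y, s (mul x y) = mul (s x) (s y)) ->
  forall x, teq2 (tmap2 s s (D x)) (D (s x)).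
Proof.
move=> s_lin Hs s_alpha s_beta s_mul x f g.
rewrite pair2_tmap2 !pair2_Delta_r /=.
under eq_bigr do rewrite s_alpha s_mul.
under [X in _ - X = _]eq_bigr do rewrite s_beta s_mul.
rewrite (sum_invariant Hs alpha_lin (mull_lin (s x))).
by rewrite (sum_invariant Hs (mulr_lin (s x)) beta_lin).
Qed.

Hypotheses (Ha : teq2 (tmap2 alpha alpha r) r) (Hb : teq2 (tmap2 beta beta r) r).

Lemma Delta_r_mul a b : teq2 (D (mul a b))
  ([seq (mul (alpha a) q.1, beta q.2) | q <- D b]
   ++ [seq (alpha q.1, mul q.2 (beta b)) | q <- D a]).
Proof.
move=> f g; rewrite pair2_cat.
rewrite (pair2_tmap2 f g (mulr_lin (alpha a)) beta_lin (D b)).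
rewrite (pair2_tmap2 f g alpha_lin (mull_lin (beta b)) (D a)) !pair2_Delta_r /=.
have -> : \sum_(p <- r) f (mul (alpha a) (alpha p.1)) * g (beta (mul p.2 b)) =
          \sum_(p <- r) f (alpha (mul a p.1)) * g (mul (beta p.2) (beta b)).
  by apply: eq_bigr => p _; rewrite alpha_mul beta_mul.
under [X in _ = _ - X + _]eq_bigr do rewrite assoc.
under [X in _ = _ + (X - _)]eq_bigr do rewrite -assoc.
rewrite (sum_invariant Hb (mulr_lin (mul a b)) beta_lin).
rewrite (sum_invariant Ha alpha_lin (mull_lin (mul a b))); ring.
Qed.

Section Coassociativity.
Variables (f g h : {scalar A}) (a : A).

Lemma pair3_DeltaL_Delta_r :
  pair3 f g h (DeltaL D beta (D a)) =
    \sum_(p <- r) \sum_(q <- r) f (alpha q.1) * g (mul q.2 (alpha p.1)) * h (beta (mul p.2 a))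
  - \sum_(p <- r) \sum_(q <- r) f (mul (alpha p.1) q.1) * g (beta q.2) * h (beta (mul p.2 a))
  - (\sum_(p <- r) \sum_(q <- r) f (alpha q.1) * g (mul q.2 (mul a p.1)) * h (beta (beta p.2))
   - \sum_(p <- r) \sum_(q <- r) f (mul (mul a p.1) q.1) * g (beta q.2) * h (beta (beta p.2))).
Proof.
rewrite /pair3 /DeltaL big_flatten big_map /=.
under eq_bigr do rewrite big_map /=.
rewrite (sum_Delta_r (F := fun u v => \sum_(q <- D u) f q.1 * g q.2 * h (beta v))) /=; last first.
  by move=> u v; rewrite -!big_distrl /= -!/(pair2 f g _) pair2_Delta_rN1 mulNr.
under eq_bigr do rewrite sum_Delta_r_mulr.
under [X in _ - X]eq_bigr do rewrite sum_Delta_r_mulr.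
by rewrite !sumrB.
Qed.

(* The second sum is normalised so that it cancels the third one of [pair3_DeltaL_Delta_r]. *)
Lemma pair3_DeltaR_Delta_r :
  pair3 f g h (DeltaR alpha D (D a)) =
    \sum_(p <- r) \sum_(q <- r) f (alpha (alpha p.1)) * g (alpha q.1) * h (mul q.2 (mul p.2 a))
  - \sum_(p <- r) \sum_(q <- r) f (alpha q.1) * g (mul q.2 (mul a p.1)) * h (beta (beta p.2))
  - (\sum_(p <- r) \sum_(q <- r) f (alpha (mul a p.1)) * g (alpha q.1) * h (mul q.2 (beta p.2))
   - \sum_(p <- r) \sum_(q <- r) f (alpha (mul a p.1)) * g (mul (beta p.2) q.1) * h (beta q.2)).
Proof.
rewrite /pair3 /DeltaR big_flatten big_map /=.
under eq_bigr do rewrite big_map /=.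
rewrite (sum_Delta_r (F := fun u v => \sum_(q <- D v) f (alpha u) * g q.1 * h q.2)) /=; last first.
  move=> u v; rewrite -sumrN; apply: eq_bigr => q _.
  by rewrite linearN1_fun // scalarN1 !mulNr.
under eq_bigr do rewrite sum_Delta_r_mull.
under [X in _ - X]eq_bigr do rewrite sum_Delta_r_mull.
rewrite !sumrB; congr (_ - _ - _).
transitivity (\sum_(p <- r) \sum_(q <- r)
  f (alpha (alpha p.1)) * g (mul (alpha p.2) (mul a q.1)) * h (beta (beta q.2))).
  apply: eq_bigr => p _; rewrite -(sum_invariantl Hb (mulr_lin (mul p.2 a)) beta_lin).
  by apply: eq_bigr => q _; rewrite assoc.
rewrite exchange_big /=; apply: eq_bigr => q _.
exact: (sum_invariantr Ha alpha_lin (mull_lin (mul a q.1))).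
Qed.

Lemma pair3_lact_Ar :
  pair3 f g h (lact mul alpha beta a (Ar mul alpha beta r)) =
    \sum_(p <- r) \sum_(q <- r) f (mul (mul a p.1) q.1) * g (beta q.2) * h (beta (beta p.2))
  - \sum_(p <- r) \sum_(q <- r) f (alpha (mul a p.1)) * g (mul (beta p.2) q.1) * h (beta q.2)
  + \sum_(p <- r) \sum_(q <- r) f (alpha (mul a p.1)) * g (alpha q.1) * h (mul q.2 (beta p.2)).
Proof.
rewrite /lact /Ar /r13r12 /r12r23 /r23r13 /tscale3 /pair3 !map_cat !big_cat !big_map.
rewrite !big_allpairs_dep /= addrA -!sumrN.
congr (_ + _ + _); apply: eq_bigr => p _.
- under eq_bigr do rewrite assoc.
  exact: (sum_invariantr Hb (mulr_lin (mul a p.1)) beta_lin).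
- under eq_bigr do rewrite (linearN1_fun (mulr_lin _)) scalarN1 !mulNr beta_mul -alpha_mul.
  rewrite sumrN; congr (- _); exact: (sum_invariantl Hb (mulr_lin (beta p.2)) beta_lin).
- under eq_bigr do rewrite beta_mul -alpha_mul -alpha_beta.
  exact: (sum_invariantl Hb alpha_lin (mull_lin (beta p.2))).
Qed.

Lemma pair3_ract_Ar :
  pair3 f g h (ract mul alpha beta (Ar mul alpha beta r) a) =
    \sum_(p <- r) \sum_(q <- r) f (mul (alpha p.1) q.1) * g (beta q.2) * h (beta (mul p.2 a))
  - \sum_(p <- r) \sum_(q <- r) f (alpha q.1) * g (mul q.2 (alpha p.1)) * h (beta (mul p.2 a))
  + \sum_(p <- r) \sum_(q <- r) f (alpha (alpha p.1)) * g (alpha q.1) * h (mul q.2 (mul p.2 a)).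
Proof.
rewrite /ract /Ar /r13r12 /r12r23 /r23r13 /tscale3 /pair3 !map_cat !big_cat !big_map.
rewrite !big_allpairs_dep /= addrA -!sumrN.
congr (_ + _ + _).
- apply: eq_bigr => p _.
  under eq_bigr do rewrite alpha_mul alpha_beta -beta_mul.
  exact: (sum_invariantr Ha (mulr_lin (alpha p.1)) beta_lin).
- rewrite exchange_big /=; apply: eq_bigr => q _.
  under eq_bigr do rewrite (linearN1_fun alpha_lin) scalarN1 !mulNr alpha_mul -beta_mul.
  rewrite sumrN; congr (- _).
  exact: (sum_invariantr Ha alpha_lin (mull_lin (alpha q.1))).
- apply: eq_bigr => p _.
  under eq_bigr do rewrite -assoc.
  exact: (sum_invariantl Ha alpha_lin (mull_lin (mul p.2 a))).
Qed.

Lemma Delta_r_coassociator :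
  pair3 f g h (DeltaL D beta (D a)) - pair3 f g h (DeltaR alpha D (D a)) =
  pair3 f g h (lact mul alpha beta a (Ar mul alpha beta r))
  - pair3 f g h (ract mul alpha beta (Ar mul alpha beta r) a).
Proof. by rewrite pair3_DeltaL_Delta_r pair3_DeltaR_Delta_r pair3_lact_Ar pair3_ract_Ar; ring. Qed.

End Coassociativity.

Lemma Delta_r_coassoc :
  (forall a, teq3 (lact mul alpha beta a (Ar mul alpha beta r))
                  (ract mul alpha beta (Ar mul alpha beta r) a)) ->
  forall x, teq3 (DeltaL D beta (D x)) (DeltaR alpha D (D x)).
Proof.
move=> HAr x f g h; apply/eqP; rewrite -subr_eq0 Delta_r_coassociator.
by rewrite (HAr x f g h) subrr.
Qed.

Lemma Delta_r_alpha x : teq2 (tmap2 alpha alpha (D x)) (D (alpha x)).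
Proof. by apply: Delta_r_morph => // y; rewrite alpha_beta. Qed.

Lemma Delta_r_beta x : teq2 (tmap2 beta beta (D x)) (D (beta x)).
Proof. by apply: Delta_r_morph => // y; rewrite alpha_beta. Qed.

End RMatrixCoproduct.

Theorem proposition5p5 (K : fieldType) (A : lmodType K)
    (mul : A -> A -> A) (alpha beta : A -> A) (r : tensor2 A) :
  BiHomAssociative mul alpha beta ->
  teq2 (tmap2 alpha alpha r) r ->
  teq2 (tmap2 beta beta r) r ->
  (forall a : A, teq3 (lact mul alpha beta a (Ar mul alpha beta r))
                      (ract mul alpha beta (Ar mul alpha beta r) a)) ->
  InfBiHomBialgebra mul (Delta_r mul alpha beta r) alpha beta beta alpha.
Proof.
move=> HA Ha Hb HAr; have [_ _ alpha_lin beta_lin alpha_beta alpha_mul beta_mul _] := HA.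
split=> //.
- split=> //.
  + exact: Delta_r_linear.
  + exact: Delta_r_beta.
  + exact: Delta_r_alpha.
  + exact: Delta_r_coassoc.
- exact: Delta_r_mul.
- exact: Delta_r_alpha.
- exact: Delta_r_beta.
Qed.
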